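(* For each lattice $l$ and $t\in\mathbb{R}$ let $\Phi^l_t:X^l\to X^l$, $\Phi^l_t(q,v)=\big(q+[\,2t(d_ev_e)_{e\in l}\,],\,v\big)$, be the Hamiltonian flow of $H_l(q,v)=\sum_{e\in l}d_e\|v_e\|^2$. Then for every $t\in\mathbb{R}$ there is a well-defined map $\tau_t:A_0^\infty\to A_0^\infty$ such that $$\tau_t(f\circ\gamma_l)=(f\circ\Phi^l_t)\circ\gamma_l\qquad\text{for all } l\in\mathcal{L},\ f\in A_0^l;$$ in particular the C*-algebra $A_0^\infty$ is conserved by this time evolution.
   Context: Fix integers $n,D\ge1$. $G=\mathbb{T}^n=\mathbb{R}^n/\mathbb{Z}^n$; for a finite set $S$ and $x\in(\mathbb{R}^n)^S$, $[x]\in G^S$ is its class mod $(\mathbb{Z}^n)^S$. $B:=\{x\in\mathbb{R}^n:\|x\|<1/2\}$; $\cdot$ is the standard dot product. Lattices. A lattice is a finite set $l\subseteq\mathbb{R}^D\times\mathbb{R}^D$ of edges $e=(x,y)$ with $x<y$ lexicographically, distinct edges meeting at most at endpoints; $d_e=\|y-x\|$. $l\le m$ means every $e=(x_1,x_2)\in l$ is subdivided in $m$: there are $N\ge0$, $0<t_1<\dots<t_N<1$ with $y_0=x_1$, $y_s=(1-t_s)x_1+t_sx_2$, $y_{N+1}=x_2$, and all pieces $e_s=(y_{s-1},y_s)\in m$. $\mathcal{L}$ = set of lattices, directed by $\le$. Maps. For $l\le m$: $\gamma^{\mathrm{conf}}_{lm}(q)_e=\sum_s q_{e_s}$ ($G^m\to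 G^l$), $\gamma^{\mathrm{mom}}_{lm}(v)_e=\sum_s\frac{d_{e_s}}{d_e}v_{e_s}$, $\gamma_{lm}=(\gamma^{\mathrm{conf}}_{lm},\gamma^{\mathrm{mom}}_{lm}):X^m\to X^l$ where $X^l:=G^l\times(\mathbb{R}^n)^l$; $X^\infty=\varprojlim X^l$ with projections $\gamma_l:X^\infty\to X^l$. Algebras. $\mathcal{A}_0^l$ is the span of the functions $([x],v)\mapsto e^{2\pi ib\cdot x}e^{i\xi\cdot v}g(P_Vv)$ on $X^l$ ($b\in(\mathbb{Z}^n)^l$, $\xi\in(\mathbb{R}^n)^l$, $V$ a linear subspace of $(\mathbb{R}^n)^l$ with orthogonal projection $P_V$, $g\in\mathcal{S}(V)$ with compactly supported smooth Fourier transform); $A_0^l$ is its closure in the sup norm. $\mathcal{A}_0^\infty:=\{f\circ\gamma_l:l\in\mathcal{L},f\in\mathcal{A}_0^l\}\subseteq C_b(X^\infty)$ and $A_0^\infty$ is its sup-norm closure (which contains $f\circ\gamma_l$ for all $f\in A_0^l$). *)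

From HB Require Import structures.
From mathcomp Require Import all_boot all_order all_algebra.
From mathcomp Require Import finmap complex.
From mathcomp Require Import all_classical all_reals all_analysis.

Set Implicit Arguments.
Unset Strict Implicit.
Unset Printing Implicit Defensive.
Import Order.TTheory GRing.Theory Num.Theory.
Import numFieldNormedType.Exports.
Local Open Scope ring_scope.
Local Open Scope complex_scope.

Section Defs.
Context {R : realType}.
Local Notation C := (R[i]).

Definition dotr {k : nat} (x y : 'rV[R]_k) : R := \sum_i x 0 i * y 0 i.
Definition enorm {k : nat} (x : 'rV[R]_k) : R := Num.sqrt (dotr x x).
Definition expi (th : R) : C := (cos th) +i* (sin th).

Definition pderiv {k : nat} (i : 'I_k) (f : 'rV[R]_k -> R) : 'rV[R]_k -> R :=
  fun x => 'D_(delta_mx 0 i) f x.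
Definition iter_pderiv {k : nat} (s : seq 'I_k) (f : 'rV[R]_k -> R) :=
  foldr pderiv f s.
Definition smoothR {k : nat} (f : 'rV[R]_k -> R) : Prop :=
  forall s : seq 'I_k, continuous (iter_pderiv s f) /\
    forall x (i : 'I_k), derivable (iter_pderiv s f) x (delta_mx 0 i).
Definition smoothC {k : nat} (f : 'rV[R]_k -> C) : Prop :=
  smoothR (fun x => complex.Re (f x)) /\ smoothR (fun x => complex.Im (f x)).
Definition rapid_decay {k : nat} (f : 'rV[R]_k -> R) : Prop :=
  forall (s : seq 'I_k) (m : nat), exists M : R,
    forall x, (1 + enorm x) ^+ m * `|iter_pderiv s f x| <= M.
Definition schwartz {k : nat} (h : 'rV[R]_k -> C) : Prop :=
  smoothC h /\ rapid_decay (fun x => complex.Re (h x))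
            /\ rapid_decay (fun x => complex.Im (h x)).

Fixpoint iint (k : nat) : ('rV[R]_k -> R) -> R :=
  match k return ('rV[R]_k -> R) -> R with
  | 0 => fun F => F 0
  | k'.+1 => fun F =>
      Rintegral (@lebesgue_measure R) setT
        (fun x : R => iint (fun y : 'rV[R]_k' => F (row_mx (x%:M : 'rV[R]_1) y)))
  end.
Definition intC {k : nat} (F : 'rV[R]_k -> C) : C :=
  (iint (fun x => complex.Re (F x))) +i* (iint (fun x => complex.Im (F x))).
Definition fourier {k : nat} (h : 'rV[R]_k -> C) : 'rV[R]_k -> C :=
  fun xi => intC (fun x => h x * expi (- dotr xi x)).
Definition compact_support {k : nat} (f : 'rV[R]_k -> C) : Prop :=
  exists r : R, forall x, r < enorm x -> f x = 0.
Definition admissible {k : nat} (h : 'rV[R]_k -> C) : Prop :=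
  schwartz h /\ smoothC (fourier h) /\ compact_support (fourier h).

(* ---------- the torus T^n = R^n / Z^n (canonical representatives in [0,1)^n) ---------- *)
Definition frac (r : R) : R := r - (Num.floor r)%:~R.
Lemma frac_in (r : R) : (0 <= frac r) && (frac r < 1).
Proof.
apply/andP; split; first by rewrite subr_ge0 floor_le.
by rewrite ltrBlDr addrC -[1]/(1%:~R) -intrD floorD1_gt.
Qed.

Variable n : nat.
Definition torus := {x : 'rV[R]_n | [forall i, (0 <= x 0 i) && (x 0 i < 1)]}.
Definition tproj (x : 'rV[R]_n) : torus.
Proof.
exists (map_mx frac x); apply/forallP => i; rewrite mxE; exact: frac_in.
Defined.
Definition tadd (a : torus) (x : 'rV[R]_n) : torus := tproj (val a + x).

Variable D : nat.
Definition edge := ('rV[R]_D * 'rV[R]_D)%type.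
Definition lexlt (x y : 'rV[R]_D) : Prop :=
  exists i : 'I_D, (forall j : 'I_D, (j < i)%N -> x 0 j = y 0 j) /\ x 0 i < y 0 i.
Definition seg (x y : 'rV[R]_D) : set 'rV[R]_D :=
  [set z | exists t : R, 0 <= t <= 1 /\ z = (1 - t) *: x + t *: y].
Definition is_lattice (l : {fset edge}) : Prop :=
  (forall e, e \in l -> lexlt e.1 e.2) /\
  (forall e e', e \in l -> e' \in l -> e <> e' ->
     forall z, seg e.1 e.2 z -> seg e'.1 e'.2 z ->
       (z = e.1 \/ z = e.2) /\ (z = e'.1 \/ z = e'.2)).
Definition lattice := {l : {fset edge} | is_lattice l}.
Definition lat (L : lattice) : {fset edge} := proj1_sig L.
Definition dlen (e : edge) : R := enorm (e.2 - e.1).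

(* subdivision of e = (x1,x2) at 0 < t_1 < ... < t_N < 1 : pieces e_1..e_{N+1} *)
Definition subdiv_pts (e : edge) (ts : seq R) : seq 'rV[R]_D :=
  rcons (map (fun t => (1 - t) *: e.1 + t *: e.2) ts) e.2.
Definition pieces (e : edge) (ts : seq R) : seq edge :=
  pairmap pair e.1 (subdiv_pts e ts).
Definition valid_subdiv (m : {fset edge}) (e : edge) (ts : seq R) : Prop :=
  sorted <%R ts /\ all (fun t => (0 < t) && (t < 1)) ts /\
  all (fun p => p \in m) (pieces e ts).
Definition lattice_le (l m : {fset edge}) : Prop :=
  forall e, e \in l -> exists ts, valid_subdiv m e ts.
(* the (unique, when l <= m) subdivision of e in m *)
Definition ts_of (m : {fset edge}) (e : edge) : seq R :=
  xget [::] (valid_subdiv m e).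
Definition pieces_in (m : {fset edge}) (e : edge) : seq edge :=
  pieces e (ts_of m e).

Definition Xl (l : {fset edge}) := ((l -> torus) * (l -> 'rV[R]_n))%type.

Definition extm (m : {fset edge}) (V : zmodType) (q : m -> V) (e : edge) : V :=
  if insub e is Some e' then q e' else 0.

Definition gamma (l m : {fset edge}) (X : Xl m) : Xl l :=
  (fun e : l => tproj (\sum_(p <- pieces_in m (val e))
                          extm (fun e' : m => val (X.1 e')) p),
   fun e : l => \sum_(p <- pieces_in m (val e))
                   (dlen p / dlen (val e)) *: extm X.2 p).

Definition Xinf :=
  {x : forall L : lattice, Xl (lat L) |
     forall L M : lattice, lattice_le (lat L) (lat M) ->
       gamma (lat L) (x M) = x L}.
Definition gammainf (L : lattice) (x : Xinf) : Xl (lat L) := proj1_sig x L.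

Definition dotl {l : {fset edge}} (v w : l -> 'rV[R]_n) : R :=
  \sum_(e : l) dotr (v e) (w e).
Definition dotb {l : {fset edge}} (b : l -> 'rV[int]_n) (x : l -> torus) : R :=
  \sum_(e : l) \sum_(i : 'I_n) (b e 0 i)%:~R * val (x e) 0 i.

(* generators  ([x],v) |-> e^{2 pi i b.x} e^{i xi.v} g(P_V v), with V spanned by the
   orthonormal family u and g(w) = h(coordinates of w in u) *)
Definition generator (l : {fset edge}) (f : Xl l -> C) : Prop :=
  exists (b : l -> 'rV[int]_n) (xi : l -> 'rV[R]_n) (k : nat)
         (u : 'I_k -> l -> 'rV[R]_n) (h : 'rV[R]_k -> C),
    (forall i j, dotl (u i) (u j) = (i == j)%:R) /\ admissible h /\
    f = fun X => expi (2 * pi * dotb b X.1) * expi (dotl xi X.2)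
                 * h (\row_i dotl (u i) X.2).

Definition spanC (T : Type) (S : (T -> C) -> Prop) (f : T -> C) : Prop :=
  exists (N : nat) (c : 'I_N -> C) (g : 'I_N -> T -> C),
    (forall i, S (g i)) /\ f = fun x => \sum_i c i * g i x.
Definition sup_closure (T : Type) (S : (T -> C) -> Prop) (f : T -> C) : Prop :=
  forall eps : R, 0 < eps -> exists g, S g /\ forall x, `|f x - g x| <= eps%:C.

Definition A0l (l : {fset edge}) := sup_closure (spanC (@generator l)).
Definition A0inf_pre (F : Xinf -> C) : Prop :=
  exists (L : lattice) (f : Xl (lat L) -> C),
    spanC (@generator (lat L)) f /\ F = f \o gammainf L.
Definition A0inf := sup_closure A0inf_pre.

Definition Phi (l : {fset edge}) (t : R) (X : Xl l) : Xl l :=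
  (fun e => tadd (X.1 e) ((2 * t * dlen (val e)) *: X.2 e), X.2).

End Defs.

From Pilot Require Import Defs.
From HB Require Import structures.
From mathcomp Require Import all_boot all_order all_algebra.
From mathcomp Require Import finmap complex.
From mathcomp Require Import all_classical all_reals all_analysis.
From mathcomp Require Import ring lra.

(* The free flows are compatible with the projections: pushing the flow of a
   finer lattice [m] down to [l], the shifts [2 t d_p v_p] of the pieces [p] of
   an edge [e] add up to [2 t d_e] times the length-weighted average momentum,
   i.e. to the shift of [e].  So the [Phi^l_t] assemble to a flow [Phi_inf t] on
   [X^oo], and [tau_t F := F \o Phi_inf t].  It preserves [A_0^oo] because
   [Phi^l_t] pulls generators back to generators: the phase
   [e^{2 pi i b.q}] picks up [e^{2 pi i b.(2 t d v)}], which is absorbed into the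
   momentum frequency [xi_e + 4 pi t d_e b_e]; and precomposition commutes with
   linear spans and with sup-norm closures. *)

Set Implicit Arguments.
Unset Strict Implicit.
Unset Printing Implicit Defensive.
Import Order.TTheory GRing.Theory Num.Theory.
Local Open Scope ring_scope.
Local Open Scope complex_scope.

Section IntegerRows.
Variables (R : realType) (k : nat).

Definition int_rV : {pred 'rV[R]_k} := [pred x : 'rV[R]_k | [forall i, x 0 i \is a Num.int]].

Lemma int_rV_zmod_closed : zmod_closed int_rV.
Proof.
split; first by apply/forallP => i; rewrite mxE.
by move=> x y /forallP hx /forallP hy; apply/forallP => i; rewrite !mxE rpredB.
Qed.

HB.instance Definition _ := GRing.isZmodClosed.Build _ int_rV int_rV_zmod_closed.

End IntegerRows.

Arguments int_rV {R k}.

Section Torus.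
Variables (R : realType) (n : nat).
Implicit Types x y w : 'rV[R]_n.

Lemma val_tprojB x : val (tproj x) - x \in int_rV.
Proof.
apply/forallP => i; rewrite !mxE /Defs.frac.
by rewrite addrAC subrr add0r rpredN intr_int.
Qed.

Lemma tproj_eq x y : x - y \in int_rV -> tproj x = tproj y.
Proof.
move=> /forallP hxy; apply: val_inj; apply/matrixP => i j; rewrite !mxE (ord1 i).
have := hxy j; rewrite !mxE intrEfloor => /eqP hj.
have -> : x 0 j = y 0 j + (x 0 j - y 0 j) by rewrite addrC subrK.
rewrite /Defs.frac -hj; set z := Num.floor _.
by rewrite floorDrz ?intr_int // intrKfloor intrD opprD addrACA subrr addr0.
Qed.

Lemma tadd_tproj x w : tadd (tproj x) w = tproj (x + w).
Proof. by apply: tproj_eq; rewrite opprD addrACA subrr addr0 val_tprojB. Qed.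

End Torus.

Section FlowProjection.
Variables (R : realType) (n D : nat).

Lemma lexlt_dlen_gt0 (e : edge D) : lexlt e.1 e.2 -> 0 < dlen e :> R.
Proof.
case=> i [_ hi]; rewrite /dlen /enorm sqrtr_gt0 /dotr (bigD1 i) //= ltr_pwDl //.
  by rewrite !mxE -expr2 exprn_gt0 // subr_gt0.
by apply: sumr_ge0 => j _; rewrite -expr2 sqr_ge0.
Qed.

Lemma lattice_dlen_neq0 (L : @lattice R D) (e : edge D) : e \in lat L -> dlen e != 0.
Proof. by case: L => l [hlex _] /= /hlex /lexlt_dlen_gt0 /lt0r_neq0. Qed.

Lemma gamma_Phi (l m : {fset edge D}) (t : R) (X : Xl n m) :
  (forall e, e \in l -> dlen e != 0) ->
  gamma l (Phi t X) = Phi t (gamma l X).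
Proof.
move=> hl; rewrite /gamma /Phi /=; congr pair; apply: funext => e /=.
have hshift : (2 * t * dlen (val e)) *:
      \sum_(p <- pieces_in m (val e)) (dlen p / dlen (val e)) *: extm X.2 p
    = \sum_(p <- pieces_in m (val e)) (2 * t * dlen p) *: extm X.2 p.
  rewrite scaler_sumr; apply: eq_bigr => p _; rewrite scalerA; congr (_ *: _).
  by field; exact: hl (fsvalP e).
rewrite tadd_tproj hshift -big_split /=; apply: tproj_eq.
rewrite -sumrB; apply: rpred_sum => p _; rewrite /extm.
case: insubP => [e' _ <-|_]; first exact: val_tprojB.
by rewrite scaler0 !addr0 subr0 rpred0.
Qed.

Definition Phi_inf (t : R) (x : @Xinf R n D) : @Xinf R n D.
Proof.
exists (fun L => Phi t (gammainf L x)) => L M hLM.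
by rewrite gamma_Phi; [rewrite (proj2_sig x L M hLM)|exact: lattice_dlen_neq0].
Defined.

End FlowProjection.

Section Generators.
Variable R : realType.

Lemma expiD (a b : R) : expi (a + b) = expi a * expi b.
Proof.
rewrite /expi cosD sinD; apply/eqP; rewrite eq_complex /=.
by apply/andP; split; apply/eqP; lra.
Qed.

Lemma periodicz (f : R -> R) (T : R) : periodic f T -> forall z a, f (a + T *~ z) = f a.
Proof.
move=> hf [m|m] a; first by rewrite -pmulrn periodicn.
by rewrite NegzE mulrNz -pmulrn -(periodicn hf m.+1 (a - T *+ m.+1)) subrK.
Qed.

Lemma expiD_2pi_int (a z : R) : z \is a Num.int -> expi (a + 2 * pi * z) = expi a.
Proof.
rewrite intrEfloor => /eqP <-.
have -> : 2 * pi * (Num.floor z)%:~R = (pi *+ 2) *~ Num.floor z :> R.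
  by rewrite mulrzr mulr_natl.
by rewrite /expi (periodicz (@cosD2pi R)) (periodicz (@sinD2pi R)).
Qed.

Variables (n D : nat).

Lemma dotb_tadd (l : {fset edge D}) (b : l -> 'rV[int]_n) (x : l -> torus n)
    (w : l -> 'rV[R]_n) :
  dotb b (fun e => tadd (x e) (w e))
    - (dotb b x + dotl (fun e => map_mx intr (b e)) w) \is a Num.int.
Proof.
rewrite /dotb /dotl /dotr -big_split -sumrB; apply: rpred_sum => e _.
rewrite -big_split -sumrB; apply: rpred_sum => i _ /=.
have /forallP/(_ i) := val_tprojB (val (x e) + w e); rewrite !mxE => hint.
by rewrite -mulrDr -mulrBr rpredM ?intr_int.
Qed.

Lemma generator_Phi (l : {fset edge D}) (t : R) (f : Xl n l -> R[i]) :
  generator f -> generator (f \o Phi t).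
Proof.
case=> b [xi [k [u [h [hu [hh ->]]]]]].
pose c (e : l) := 2 * t * dlen (val e).
pose bR (e : l) := map_mx intr (b e) : 'rV[R]_n.
exists b, (fun e => xi e + (2 * pi * c e) *: bR e), k, u, h; do 2!split => //.
apply: funext => X /=.
pose w (e : l) := c e *: X.2 e.
have hxi : dotl (fun e => xi e + (2 * pi * c e) *: bR e) X.2
    = dotl xi X.2 + 2 * pi * dotl bR w.
  rewrite /dotl /dotr mulr_sumr -big_split; apply: eq_bigr => e _.
  rewrite mulr_sumr -big_split; apply: eq_bigr => i _; rewrite !mxE /=; ring.
have hK := dotb_tadd b X.1 w.
set K := _ - _ in hK.
have -> : 2 * pi * dotb b (Phi t X).1
    = (2 * pi * dotb b X.1 + 2 * pi * dotl bR w) + 2 * pi * K.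
  by rewrite -!mulrDr addrC subrK.
by rewrite expiD_2pi_int // hxi !expiD; ring.
Qed.

End Generators.

Section Precomposition.
Variables (R : realType) (T U : Type) (phi : T -> U).
Variables (S : (U -> R[i]) -> Prop) (S' : (T -> R[i]) -> Prop).
Hypothesis S_comp : forall g, S g -> S' (g \o phi).

Lemma spanC_comp f : spanC S f -> spanC S' (f \o phi).
Proof.
case=> N [c [g [hg ->]]].
by exists N, c, (fun i => g i \o phi); split=> // i; apply: S_comp.
Qed.

Lemma sup_closure_comp f : sup_closure S f -> sup_closure S' (f \o phi).
Proof.
move=> hf eps heps; have [g [hg hfg]] := hf eps heps.
by exists (g \o phi); split=> [|x]; [apply: S_comp|apply: hfg].
Qed.

End Precomposition.

Lemma A0inf_pre_Phi_inf (R : realType) (n D : nat) (t : R) (F : @Xinf R n D -> R[i]) :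
  A0inf_pre F -> A0inf_pre (F \o Phi_inf t).
Proof.
case=> L [f [hf ->]]; exists L, (f \o Phi t); split=> //.
exact: spanC_comp (@generator_Phi R n D _ t) _ hf.
Qed.

Theorem mainTheorem4 (R : realType) (n D : nat) (hn : (0 < n)%N) (hD : (0 < D)%N)
  (t : R) :
  exists tau : (@Xinf R n D -> R[i]) -> (@Xinf R n D -> R[i]),
    (forall F, @A0inf R n D F -> @A0inf R n D (tau F)) /\
    (forall (L : @lattice R D) (f : @Xl R n D (lat L) -> R[i]),
        A0l f -> tau (f \o gammainf L) = (f \o Phi t) \o gammainf L).
Proof.
exists (fun F => F \o Phi_inf t); split=> // F.
exact: sup_closure_comp (@A0inf_pre_Phi_inf R n D t) F.
Qed.
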